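(* Let $G$ be a finite-by-abelian profinite group (i.e. $G$ has a finite normal subgroup $T$ with $G/T$ abelian). Then $G$ is central-by-finite, i.e. the center of $G$ has finite index in $G$. *)

(* topology from mathcomp-analysis; groups given
   by explicit operations (MathComp finGroupType is only for finite groups). *)
From HB Require Import structures.
From mathcomp Require Import all_boot all_order all_algebra.
From mathcomp Require Import all_classical all_reals topology.
Set Implicit Arguments. Unset Strict Implicit. Unset Printing Implicit Defensive.
Local Open Scope classical_set_scope.

Record is_group (G : Type) (mul : G -> G -> G) (one : G) (inv : G -> G) : Prop := {
  grp_mulA : forall x y z, mul x (mul y z) = mul (mul x y) z;
  grp_mul1g : forall x, mul one x = x;
  grp_mulg1 : forall x, mul x one = x;
  grp_mulVg : forall x, mul (inv x) x = one;
  grp_mulgV : forall x, mul x (inv x) = one }.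

Definition is_topological_group (G : topologicalType)
  (mul : G -> G -> G) (one : G) (inv : G -> G) : Prop :=
  [/\ is_group mul one inv,
      continuous (fun p : G * G => mul p.1 p.2) &
      continuous inv].

Definition is_profinite_group (G : topologicalType)
  (mul : G -> G -> G) (one : G) (inv : G -> G) : Prop :=
  [/\ is_topological_group mul one inv,
      compact [set: G],
      hausdorff_space G &
      totally_disconnected [set: G]].

Definition is_subgroup (G : Type) (mul : G -> G -> G) (one : G) (inv : G -> G)
  (H : set G) : Prop :=
  [/\ H one, (forall x y, H x -> H y -> H (mul x y)) & (forall x, H x -> H (inv x))].

Definition is_normal_subgroup (G : Type) (mul : G -> G -> G) (one : G) (inv : G -> G)
  (H : set G) : Prop :=
  is_subgroup mul one inv H /\ forall g h, H h -> H (mul (inv g) (mul h g)).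

(* G/H is abelian: the cosets (xy)H and (yx)H coincide for all x, y. *)
Definition quotient_abelian (G : Type) (mul : G -> G -> G) (H : set G) : Prop :=
  forall x y, exists2 h, H h & mul x y = mul (mul y x) h.

Definition center (G : Type) (mul : G -> G -> G) : set G :=
  [set z | forall g, mul z g = mul g z].

Definition finite_index (G : Type) (mul : G -> G -> G) (inv : G -> G) (H : set G) : Prop :=
  exists2 F : set G, finite_set F & forall g, exists2 f, F f & H (mul (inv f) g).

(* The commutator map (x, y) |-> [x, y] is continuous and takes values in the
   finite set T, in which 1 is isolated because G is Hausdorff.  So commuting
   pairs form an open set: each pair (x, 1) has a product neighbourhood of
   commuting pairs, and compactness of G yields a neighbourhood of 1 commuting
   with all of G.  The centre is thus a neighbourhood of 1, and in a compact
   group such a set has finite index. *)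

From HB Require Import structures.
From mathcomp Require Import all_boot all_order all_algebra.
From mathcomp Require Import all_classical all_reals topology.
From mathcomp Require Import unstable finmap.
Set Implicit Arguments. Unset Strict Implicit. Unset Printing Implicit Defensive.
Local Open Scope classical_set_scope.

Definition commutator (G : Type) (mul : G -> G -> G) (inv : G -> G) (x y : G) : G :=
  mul (inv (mul y x)) (mul x y).

Section Commutator.
Variables (G : Type) (mul : G -> G -> G) (one : G) (inv : G -> G).
Hypothesis grp : is_group mul one inv.
Local Notation comm := (commutator mul inv).

Lemma mul_commutator x y : mul x y = mul (mul y x) (comm x y).
Proof. by rewrite /commutator (grp_mulA grp) (grp_mulgV grp) (grp_mul1g grp). Qed.

Lemma commutator_eq1 x y : ((comm x y) = one) <-> (mul x y = mul y x).
Proof.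
split=> [c1|xy]; last by rewrite /commutator xy (grp_mulVg grp).
by rewrite mul_commutator c1 (grp_mulg1 grp).
Qed.

Lemma commutator_quotient_abelian (T : set G) :
  quotient_abelian mul T -> forall x y, T (comm x y).
Proof.
move=> abT x y; have [h Th xy] := abT x y.
by rewrite /commutator xy (grp_mulA grp) (grp_mulVg grp) (grp_mul1g grp).
Qed.

End Commutator.

(* [compact_cover] is only stated for pointed spaces; [x] provides the point. *)
Lemma compact_cover_pointed (X : topologicalType) (x : X) (A : set X) :
  compact A -> cover_compact A.
Proof.
pose Xx : ptopologicalType := HB.pack X (isPointed.Build X x).
by rewrite -[cover_compact A]/(@cover_compact Xx A) -compact_cover.
Qed.

Lemma nbhs1_center (G : topologicalType) (mul : G -> G -> G) (one : G) :
  compact [set: G] ->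
  (forall x : G, \forall p \near (x, one), mul p.1 p.2 = mul p.2 p.1) ->
  nbhs one (center mul).
Proof.
move=> /compact_near_coveringP cpt near_comm.
have := cpt _ _ (fun z y => mul y z = mul z y) (nbhs_filter one) (fun x _ => near_comm x).
by apply: filterS => z Zz g; rewrite Zz.
Qed.

Section TopologicalGroup.
Variables (G : topologicalType) (mul : G -> G -> G) (one : G) (inv : G -> G).
Hypothesis grp : is_group mul one inv.
Hypothesis mul_continuous : continuous (fun p : G * G => mul p.1 p.2).

Lemma continuous_mull a : continuous (mul a).
Proof.
move=> x; apply: (continuous_comp (f := pair a) (g := fun p : G * G => mul p.1 p.2)).
  by apply: cvg_pair; [exact: cvg_cst | exact: cvg_id].
exact: mul_continuous.
Qed.

Lemma finite_index_nbhs1 (H : set G) :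
  compact [set: G] -> nbhs one H -> finite_index mul inv H.
Proof.
move=> /(compact_cover_pointed one) cpt H1.
have Hg g : nbhs g (fun y => H (mul (inv g) y)).
  by apply: continuous_mull; rewrite /= (grp_mulVg grp).
have [D _ cov] : finite_subset_cover [set: G]
    (fun g => interior (fun y => H (mul (inv g) y))) [set: G].
  apply: cpt => [g _|g _]; first exact: open_interior.
  by exists g => //; exact: Hg.
exists [set` D]; first exact: finite_fset.
by move=> g; have [f Df /interior_subset gf] := cov g I; exists f.
Qed.

Hypothesis inv_continuous : continuous inv.

Lemma continuous_commutator :
  continuous (fun p : G * G => commutator mul inv p.1 p.2).
Proof.
move=> p; apply: (continuous_comp
  (f := fun p : G * G => (inv (mul p.2 p.1), mul p.1 p.2))
  (g := fun q : G * G => mul q.1 q.2)); last exact: mul_continuous.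
apply: cvg_pair; last exact: mul_continuous.
apply: (continuous_comp (f := fun p : G * G => mul p.2 p.1)); last exact: inv_continuous.
apply: (continuous_comp (f := @swap G G) (g := fun q : G * G => mul q.1 q.2)).
  exact: swap_continuous.
exact: mul_continuous.
Qed.

Lemma near_commute (T : set G) :
  accessible_space G -> finite_set T ->
  (forall x y, T (commutator mul inv x y)) ->
  forall a b, mul a b = mul b a -> \forall p \near (a, b), mul p.1 p.2 = mul p.2 p.1.
Proof.
move=> T1 finT commT a b ab.
have W1 : nbhs one (~` (T `\ one)).
  apply: open_nbhs_nbhs; split; last by move=> [_]; apply.
  apply: closed_openC; apply: (proj1 accessible_finite_set_closed T1).
  exact: finite_setD.
have : nbhs (a, b) [set p | (~` (T `\ one)) (commutator mul inv p.1 p.2)].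
  apply: continuous_commutator; rewrite /= (proj2 (commutator_eq1 grp a b) ab).
  exact: W1.
apply: filterS => -[x y] /= nT.
apply/(commutator_eq1 grp); apply: contrapT => c1.
by apply: nT; split; [exact: commT | exact: c1].
Qed.

End TopologicalGroup.

Theorem lemma2p7 (G : topologicalType) (mul : G -> G -> G) (one : G) (inv : G -> G)
  (T : set G) :
  is_profinite_group mul one inv ->
  is_normal_subgroup mul one inv T ->
  finite_set T ->
  quotient_abelian mul T ->
  finite_index mul inv (center mul).
Proof.
move=> [[grp mulC invC] cpt hausG _] _ finT abT.
have commT := commutator_quotient_abelian grp abT.
have commute_near1 (x : G) : \forall p \near (x, one), mul p.1 p.2 = mul p.2 p.1.
  apply: (near_commute grp mulC invC (hausdorff_accessible hausG) finT commT).
  by rewrite (grp_mulg1 grp) (grp_mul1g grp).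
exact/(finite_index_nbhs1 grp mulC cpt)/(nbhs1_center cpt commute_near1).
Qed.
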